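(* Let $n\ge2$, $\alpha\in(1,2]$, $K\ge2$, and let $\mathcal{M}=\mathcal{M}(\alpha,K)$ be the collection of seeded intervals defined below. Then for every real $h$ with $0<h\le n/2$ and every integer $\eta$ with $\max(3h/2,1)\le\eta\le n-\max(3h/2,1)$, there exist integers $l\ge1$ and $v$ such that (i) $(v-l,v+l]\in\mathcal{M}$; (ii) $h/2\le l\le\max(h,1)$; (iii) $|v-\eta|\le l/K\le l/2$. In particular, $(v-l,v+l]\subseteq(\eta-\max(3h/2,1),\ \eta+\max(3h/2,1)]$.
   Context: Seeded intervals $\mathcal{M}(\alpha,K)$ for sample size $n$: let $l_1=1$, $l_{j+1}=\max\{l_j+1,\lfloor\alpha l_j\rfloor\}$ for $j\ge1$, $H=\max\{j:l_j\le n/2\}$, $s_l=\max\{1,\lfloor l/K\rfloor\}$, $\mathcal{I}_l=\{(n-2l,n]\}\cup\{(is_l,\,is_l+2l]: i=0,1,\dots,\lfloor(n-2l)/s_l\rfloor\}$, and $\mathcal{M}(\alpha,K)=\bigcup_{j=1}^{H}\mathcal{I}_{l_j}$, where $(a,b]$ denotes the integer interval $\{a+1,\dots,b\}$. *)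

From Stdlib Require Import Reals ZArith Lra Lia.
Open Scope R_scope.

Definition Zfloor (r : R) : Z := Int_part r.

(* lseq alpha j = l_{j+1}  (0-indexed):  l_1 = 1,
   l_{j+1} = max (l_j + 1) (floor (alpha * l_j)) *)
Fixpoint lseq (alpha : R) (j : nat) : Z :=
  match j with
  | O => 1%Z
  | S k => Z.max (lseq alpha k + 1)%Z (Zfloor (alpha * IZR (lseq alpha k)))
  end.

Definition sstep (K : R) (l : Z) : Z := Z.max 1 (Zfloor (IZR l / K)).

(* An integer interval (a, b] = {a+1, ..., b} is represented by the pair (a, b).
   I_l = {(n-2l, n]} U {(i s_l, i s_l + 2l] : i = 0, ..., floor((n-2l)/s_l)} *)
Definition in_Il (n : Z) (K : R) (l : Z) (a b : Z) : Prop :=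
  (a = n - 2 * l /\ b = n)%Z \/
  exists i : Z, (0 <= i <= (n - 2 * l) / sstep K l)%Z /\
                a = (i * sstep K l)%Z /\ b = (i * sstep K l + 2 * l)%Z.

(* M(alpha, K) = union over j = 1..H of I_{l_j}, H = max {j : l_j <= n/2}.
   With 0-indexing, j0 (= j-1) ranges over indices with j0 <= H-1, i.e.
   there is some j' >= j0 with l_{j'+1} <= n/2 (this is exactly j0+1 <= H). *)
Definition in_M (n : Z) (alpha K : R) (a b : Z) : Prop :=
  exists j : nat,
    (exists j' : nat, (j <= j')%nat /\ IZR (lseq alpha j') <= IZR n / 2) /\
    in_Il n K (lseq alpha j) a b.

(* Given a scale h and a location eta far enough from the boundary, we pick
   the largest term l = l_j of the scale sequence with l_j <= max(h,1).
   Because the sequence at most doubles (alpha <= 2), this l also satisfies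
   l >= h/2.  The grid of left endpoints i*s_l of the intervals of I_l has
   mesh s_l <= l/K + 1, so dividing eta - l by s_l gives a grid point with
   remainder r in [0, s_l), i.e. r <= l/K; the interval of I_l with centre
   v = eta - r is the one sought, and it lies in the window around eta
   because r + l - 1 <= 3l/2 - 1 < max(3h/2, 1). *)

From Pilot Require Import Defs.
From Stdlib Require Import Reals ZArith Lra Lia.
Open Scope R_scope.

Lemma Zfloor_le (r : R) : IZR (Defs.Zfloor r) <= r.
Proof. unfold Defs.Zfloor. exact (proj1 (base_Int_part r)). Qed.

Lemma lseq_ge1 (alpha : R) (k : nat) : (1 <= lseq alpha k)%Z.
Proof. induction k; simpl; lia. Qed.

Lemma lseq_step (alpha : R) (k : nat) : 1 < alpha <= 2 ->
  (lseq alpha k + 1 <= lseq alpha (S k) <= 2 * lseq alpha k)%Z.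
Proof.
  intros Ha. pose proof (lseq_ge1 alpha k) as Hl. cbn [lseq].
  assert (Hfloor : (Defs.Zfloor (alpha * IZR (lseq alpha k)) <= 2 * lseq alpha k)%Z).
  { apply le_IZR. rewrite mult_IZR.
    pose proof (Zfloor_le (alpha * IZR (lseq alpha k))).
    apply IZR_le in Hl.
    assert (alpha * IZR (lseq alpha k) <= 2 * IZR (lseq alpha k))
      by (apply Rmult_le_compat_r; lra).
    lra. }
  lia.
Qed.

Lemma lseq_lower (alpha : R) (k : nat) : 1 < alpha <= 2 ->
  (Z.of_nat k + 1 <= lseq alpha k)%Z.
Proof.
  intros Ha. induction k as [|k IH]; [simpl; lia|].
  pose proof (lseq_step alpha k Ha). rewrite Nat2Z.inj_succ. lia.
Qed.

Lemma lseq_bracket (alpha h : R) : 1 < alpha <= 2 -> 1 <= h ->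
  exists j : nat, IZR (lseq alpha j) <= h < IZR (lseq alpha (S j)).
Proof.
  intros Ha Hh.
  assert (below : forall N : nat, h < IZR (lseq alpha N) ->
            exists j : nat, IZR (lseq alpha j) <= h < IZR (lseq alpha (S j))).
  { induction N as [|N IH]; intros HN; [simpl in HN; lra|].
    destruct (Rle_dec (IZR (lseq alpha N)) h) as [Hle|Hgt].
    - exists N. lra.
    - apply IH. lra. }
  apply (below (Z.to_nat (up h))).
  destruct (archimed h) as [Hup _].
  assert (Hup0 : (0 <= up h)%Z) by (apply le_IZR; lra).
  pose proof (IZR_le _ _ (lseq_lower alpha (Z.to_nat (up h)) Ha)) as Hlow.
  rewrite plus_IZR, Z2Nat.id in Hlow by exact Hup0. lra.
Qed.

Lemma scale_choice (alpha h : R) : 1 < alpha <= 2 -> 0 < h ->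
  exists j : nat, h / 2 <= IZR (lseq alpha j) <= Rmax h 1.
Proof.
  intros Ha Hh. unfold Rmax. destruct (Rle_dec h 1) as [Hh1|Hh1].
  - exists 0%nat. simpl. lra.
  - destruct (lseq_bracket alpha h Ha) as [j [Hlo Hhi]]; [lra|].
    pose proof (IZR_le _ _ (proj2 (lseq_step alpha j Ha))) as Hdouble.
    rewrite mult_IZR in Hdouble.
    exists j. lra.
Qed.

Lemma sstep_bounds (K : R) (l : Z) : 0 < K -> (0 <= l)%Z ->
  (1 <= sstep K l)%Z /\ IZR (sstep K l - 1) <= IZR l / K.
Proof.
  intros HK Hl. unfold sstep.
  pose proof (Zfloor_le (IZR l / K)) as Hfloor.
  assert (Hpos : 0 <= IZR l / K)
    by (apply Rmult_le_pos; [apply IZR_le; exact Hl | left; apply Rinv_0_lt_compat; exact HK]).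
  destruct (Z.max_spec_le 1 (Defs.Zfloor (IZR l / K))) as [[Hge ->]|[_ ->]];
    rewrite minus_IZR; simpl; split; [exact Hge|lra|lia|lra].
Qed.

Lemma grid_point (n l s eta : Z) : (1 <= s)%Z -> (l <= eta <= n - l)%Z ->
  exists i : Z, (0 <= i <= (n - 2 * l) / s)%Z /\ (0 <= eta - l - i * s < s)%Z.
Proof.
  intros Hs Heta. exists ((eta - l) / s)%Z. split.
  - split; [apply Z.div_pos | apply Z.div_le_mono]; lia.
  - pose proof (Z.div_mod (eta - l) s ltac:(lia)).
    pose proof (Z.mod_pos_bound (eta - l) s ltac:(lia)). lia.
Qed.

Lemma in_M_grid (n : Z) (alpha K : R) (j : nat) (i : Z) :
  IZR (lseq alpha j) <= IZR n / 2 ->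
  (0 <= i <= (n - 2 * lseq alpha j) / sstep K (lseq alpha j))%Z ->
  in_M n alpha K (i * sstep K (lseq alpha j))
                 (i * sstep K (lseq alpha j) + 2 * lseq alpha j).
Proof.
  intros Hl Hi. exists j. split.
  - exists j. split; [lia | exact Hl].
  - right. exists i. repeat split; lia.
Qed.

Lemma window_bounds (h l : R) : 0 < h -> 1 <= l <= Rmax h 1 ->
  Rmax h 1 <= Rmax (3 * h / 2) 1 /\ 3 * l / 2 - 1 < Rmax (3 * h / 2) 1.
Proof.
  intros Hh Hl. unfold Rmax in *.
  destruct (Rle_dec h 1); destruct (Rle_dec (3 * h / 2) 1); lra.
Qed.

Theorem lemma7 (n : Z) (alpha K : R) :
  (2 <= n)%Z -> 1 < alpha <= 2 -> 2 <= K ->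
  forall (h : R) (eta : Z),
    0 < h <= IZR n / 2 ->
    Rmax (3 * h / 2) 1 <= IZR eta <= IZR n - Rmax (3 * h / 2) 1 ->
    exists (l v : Z),
      (1 <= l)%Z /\
      in_M n alpha K (v - l) (v + l) /\
      h / 2 <= IZR l <= Rmax h 1 /\
      Rabs (IZR (v - eta)) <= IZR l / K <= IZR l / 2 /\
      (forall x : Z, (v - l < x <= v + l)%Z ->
         IZR eta - Rmax (3 * h / 2) 1 < IZR x <= IZR eta + Rmax (3 * h / 2) 1).
Proof.
  intros Hn Ha HK h eta Hh Heta.
  destruct (scale_choice alpha h Ha (proj1 Hh)) as [j Hscale].
  set (l := lseq alpha j) in *.
  assert (Hl1 : (1 <= l)%Z) by apply lseq_ge1.
  pose proof (IZR_le _ _ Hl1) as Hl1R. pose proof (IZR_le _ _ Hn) as HnR.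
  destruct (window_bounds h (IZR l) (proj1 Hh) ltac:(lra)) as [Hwide Hwin].
  assert (HlK : IZR l / K <= IZR l / 2)
    by (apply Rmult_le_compat_l; [lra | apply Rinv_le_contravar; lra]).
  destruct (sstep_bounds K l ltac:(lra) ltac:(lia)) as [Hs1 Hs].
  set (s := sstep K l) in *.
  destruct (grid_point n l s eta Hs1) as [i [Hi Hr]].
  { split; apply le_IZR; rewrite ?minus_IZR; lra. }
  set (r := (eta - l - i * s)%Z) in Hr.
  assert (HrR : 0 <= IZR r <= IZR l / K).
  { pose proof (IZR_le _ _ (proj1 Hr)).
    pose proof (IZR_le r (s - 1) ltac:(lia)). lra. }
  exists l, (l + i * s)%Z. split; [exact Hl1|]. split.
  { replace (l + i * s - l)%Z with (i * s)%Z by lia.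
    replace (l + i * s + l)%Z with (i * s + 2 * l)%Z by lia.
    apply in_M_grid; [fold l; lra | exact Hi]. }
  split; [lra|]. split.
  { replace (l + i * s - eta)%Z with (- r)%Z by (unfold r; lia).
    rewrite opp_IZR, Rabs_Ropp, Rabs_right; lra. }
  intros x Hx. split.
  - pose proof (IZR_le (eta - x) (r + l - 1) ltac:(unfold r; lia)) as Hlow.
    rewrite !minus_IZR, plus_IZR in Hlow. lra.
  - pose proof (IZR_le (x - eta) l ltac:(unfold r in *; lia)) as Hup.
    rewrite minus_IZR in Hup. lra.
Qed.
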